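(* Let $d\ge 1$ and let $\Sigma: M_d(\mathbb{C})\to M_d(\mathbb{C})$ be a general dynamical map, i.e. a linear map that is trace preserving and hermiticity preserving ($\Sigma(\rho^\dagger)=\Sigma(\rho)^\dagger$ for all $\rho$), but not necessarily positivity preserving. Then $\Sigma$ can be written as the weighted difference of two completely positive trace-preserving (CPTP) maps: there exist a real number $p>0$ and CPTP maps $\Lambda^*_+,\Lambda^*_-$ on $M_d(\mathbb{C})$ such that $$\Sigma=(1+p)\,\Lambda^*_+-p\,\Lambda^*_-.$$ Explicitly: there exist finite families of matrices $\{K_j\}_j,\{M_j\}_j\subset M_d(\mathbb{C})$ with $\Sigma(\rho)=\sum_j K_j\rho K_j^\dagger-\sum_j M_j\rho M_j^\dagger$ for all $\rho$, and for any such families and any $p>0$ with $\sum_j M_j^\dagger M_j\le p\,\mathbb{I}$, setting $D=\sqrt{p\,\mathbb{I}-\sum_j M_j^\dagger M_j}$ (positive semidefinite square root) and $$\Lambda^*_+(\rho)=\frac{\sum_j K_j\rho K_j^\dagger+D\rho D^\dagger}{1+p},\qquad \Lambda^*_-(\rho)=\frac{\sum_j M_j\rho M_j^\dagger+D\rho D^\dagger}{p},$$ the maps $\Lambda^*_\pm$ are completely positive and trace preserving and $\Sigma=(1+p)\Lambda^*_+-p\Lambda^*_-$.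
   Context: $M_d(\mathbb{C})$ denotes the complex $d\times d$ matrices, $\mathbb{I}$ the identity matrix, and $A\le B$ means $B-A$ is positive semidefinite. A linear map $\Lambda$ on $M_d(\mathbb{C})$ is completely positive (CP) iff it has a Kraus form $\Lambda(\rho)=\sum_j K_j\rho K_j^\dagger$; it is trace preserving iff $\mathrm{tr}\,\Lambda(\rho)=\mathrm{tr}\,\rho$ for all $\rho$. *)

From HB Require Import structures.
From mathcomp Require Import all_boot all_order all_algebra.
From mathcomp Require Import complex.
From mathcomp Require Import reals.
Set Implicit Arguments. Unset Strict Implicit. Unset Printing Implicit Defensive.
Import Order.TTheory GRing.Theory Num.Theory.
Local Open Scope ring_scope.

Section Defs.
Variable C : numClosedFieldType.

Definition adj (m n : nat) (A : 'M[C]_(m, n)) : 'M[C]_(n, m) :=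
  (map_mx Num.conj A)^T.

(* positive semidefinite: v^dagger A v >= 0 (real, nonnegative) for all v *)
Definition psd (d : nat) (A : 'M[C]_d) : Prop :=
  forall v : 'cV[C]_d, 0 <= (adj v *m A *m v) 0 0.

Definition loewner (d : nat) (A B : 'M[C]_d) : Prop := psd (B - A).

Definition kraus (d n : nat) (K : 'I_n -> 'M[C]_d) (rho : 'M[C]_d) : 'M[C]_d :=
  \sum_(j < n) K j *m rho *m adj (K j).

Definition is_linear_map (d : nat) (L : 'M[C]_d -> 'M[C]_d) : Prop :=
  forall (a : C) (x y : 'M[C]_d), L (a *: x + y) = a *: L x + L y.

Definition trace_preserving (d : nat) (L : 'M[C]_d -> 'M[C]_d) : Prop :=
  forall rho, \tr (L rho) = \tr rho.

Definition herm_preserving (d : nat) (L : 'M[C]_d -> 'M[C]_d) : Prop :=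
  forall rho, L (adj rho) = adj (L rho).

(* completely positive: has a (finite) Kraus form, as in the paper's convention *)
Definition completely_positive (d : nat) (L : 'M[C]_d -> 'M[C]_d) : Prop :=
  exists n (K : 'I_n -> 'M[C]_d), forall rho, L rho = kraus K rho.

Definition CPTP (d : nat) (L : 'M[C]_d -> 'M[C]_d) : Prop :=
  completely_positive L /\ trace_preserving L.

End Defs.

(* Expanding a linear map in matrix units gives
   [Sigma rho = sum_(a,b) J_ab E_a rho E_b^dagger] with [J] its Choi matrix.
   Hermiticity preservation gives the same expansion with [conj J_ab] and
   [E_a], [E_b] swapped, and the polarization identity
   [(A + w B) rho (A + w B)^dagger - (A - w B) rho (A - w B)^dagger
      = 2 (conj w A rho B^dagger + w B rho A^dagger)]
   with [w = conj J_ab] turns the sum of both expansions into a difference of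
   two Kraus sums, [Sigma = kraus K - kraus M].  Trace preservation then forces
   [sum K^dagger K = sum M^dagger M + 1].  For any [p] dominating
   [sum M^dagger M] (the sum of its eigenvalues will do), the square root [D]
   of [p - sum M^dagger M] completes [K] and [M] to Kraus families with
   [sum K^dagger K + D^dagger D = 1 + p] and [sum M^dagger M + D^dagger D = p],
   and the [D]-terms cancel in [(1 + p) Lambda_+ - p Lambda_-]. *)

From HB Require Import structures.
From mathcomp Require Import all_boot all_order all_algebra.
From mathcomp Require Import complex.
From mathcomp Require Import reals.
From mathcomp Require Import spectral.
From mathcomp Require Import ring.
Import Order.TTheory GRing.Theory Num.Theory.
Set Implicit Arguments. Unset Strict Implicit. Unset Printing Implicit Defensive.
Local Open Scope ring_scope.

Section Adjoint.
Variable C : numClosedFieldType.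
Implicit Types m n p : nat.

Lemma adjK m n (A : 'M[C]_(m, n)) : adj (adj A) = A.
Proof. by apply/matrixP => i j; rewrite !mxE conjCK. Qed.

Lemma adjM m n p (A : 'M[C]_(m, n)) (B : 'M[C]_(n, p)) :
  adj (A *m B) = adj B *m adj A.
Proof.
apply/matrixP => i j; rewrite !mxE rmorph_sum; apply: eq_bigr => k _.
by rewrite !mxE rmorphM mulrC.
Qed.

Lemma adjD m n (A B : 'M[C]_(m, n)) : adj (A + B) = adj A + adj B.
Proof. by apply/matrixP => i j; rewrite !mxE rmorphD. Qed.

Lemma adjN m n (A : 'M[C]_(m, n)) : adj (- A) = - adj A.
Proof. by apply/matrixP => i j; rewrite !mxE rmorphN. Qed.

Lemma adjZ m n c (A : 'M[C]_(m, n)) : adj (c *: A) = c^* *: adj A.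
Proof. by apply/matrixP => i j; rewrite !mxE rmorphM. Qed.

Lemma adj_sum m n (I : finType) (F : I -> 'M[C]_(m, n)) :
  adj (\sum_i F i) = \sum_i adj (F i).
Proof.
elim/big_rec2: _ => [|i A B _ <-]; last by rewrite adjD.
by apply/matrixP => i j; rewrite !mxE rmorph0.
Qed.

Lemma adj_delta m n (i : 'I_m) (j : 'I_n) :
  adj (delta_mx i j : 'M[C]_(m, n)) = delta_mx j i.
Proof.
apply/matrixP => k l; rewrite !mxE.
by case: (k == j); case: (l == i); rewrite /= ?rmorph1 ?rmorph0.
Qed.

Lemma adj_mx11 (A : 'M[C]_1) : adj A 0 0 = (A 0 0)^*.
Proof. by rewrite !mxE. Qed.

Lemma adjE m n (A : 'M[C]_(m, n)) : adj A = map_mx Num.conj A^T.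
Proof. by apply/matrixP => i j; rewrite !mxE. Qed.

End Adjoint.

Section PositiveSemidefinite.
Variable C : numClosedFieldType.
Implicit Types d m : nat.

Definition sesq d (A : 'M[C]_d) (x y : 'cV[C]_d) : C := (adj x *m A *m y) 0 0.

Lemma sesq_delta d (A : 'M[C]_d) i j : sesq A (delta_mx i 0) (delta_mx j 0) = A i j.
Proof. by rewrite /sesq adj_delta -rowE -colE !mxE. Qed.

Lemma sesq_expand d (A : 'M[C]_d) x y c :
  sesq A (x + c *: y) (x + c *: y) =
  sesq A x x + c * sesq A x y + c^* * sesq A y x + c^* * c * sesq A y y.
Proof.
rewrite /sesq adjD adjZ !mulmxDl !mulmxDr -!scalemxAl -!scalemxAr !mxE.
ring.
Qed.

(* Polarization: [e_i + c e_j] with [c = 1] and [c = 'i] separates [A i j] from [A j i]. *)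
Lemma sesq_diag_eq0 d (A : 'M[C]_d) : (forall v, sesq A v v = 0) -> A = 0.
Proof.
move=> hA; apply/matrixP => i j; rewrite mxE.
have expand c : c * A i j + c^* * A j i = 0.
  have := hA (delta_mx i 0 + c *: delta_mx j 0).
  by rewrite sesq_expand !sesq_delta -!(sesq_delta A) !hA !mulr0 addr0 add0r.
have h1 := expand 1; have hi := expand 'i.
rewrite conjC1 !mul1r in h1; rewrite conjCi mulNr in hi.
have : 'i * A i j *+ 2 = 'i * (A i j + A j i) + ('i * A i j - 'i * A j i) by ring.
by rewrite h1 hi mulr0 addr0 => /eqP; rewrite mulrn_eq0 mulf_eq0 (negPf (neq0Ci C)) => /eqP.
Qed.

Lemma sesq_adj d (A : 'M[C]_d) x y : sesq (adj A) x y = (sesq A y x)^*.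
Proof. by rewrite /sesq -adj_mx11 !adjM adjK mulmxA. Qed.

Lemma psd_adj d (A : 'M[C]_d) : psd A -> adj A = A.
Proof.
move=> hA; apply/eqP; rewrite -subr_eq0; apply/eqP/sesq_diag_eq0 => v.
rewrite /sesq mulmxBr mulmxBl mxE -/(sesq _ v v) sesq_adj mxE -/(sesq _ v v).
by rewrite geC0_conj ?subrr //; apply: hA.
Qed.

Lemma psd_conj d (P A : 'M[C]_d) : psd A -> psd (adj P *m A *m P).
Proof. by move=> hA v; have := hA (P *m v); rewrite adjM !mulmxA. Qed.

Lemma psd_diag d (s : 'rV[C]_d) : (forall k, 0 <= s 0 k) -> psd (diag_mx s).
Proof.
move=> hs v; rewrite mul_mx_diag !mxE; apply: sumr_ge0 => k _; rewrite !mxE.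
rewrite mulrAC mulrC; apply: mulr_ge0 => //.
by rewrite mulrC; apply: mul_conjC_ge0.
Qed.

Lemma psd_gram d m (M : 'I_m -> 'M[C]_d) : psd (\sum_j adj (M j) *m M j).
Proof.
move=> v; rewrite mulmx_sumr mulmx_suml summxE; apply: sumr_ge0 => j _.
rewrite !mulmxA -mulmxA -adjM mxE; apply: sumr_ge0 => k _.
by rewrite !mxE mulrC; apply: mul_conjC_ge0.
Qed.

Lemma psd_spectral d (A : 'M[C]_d) : psd A ->
  exists (P : 'M[C]_d) (s : 'rV[C]_d),
    [/\ adj P *m P = 1%:M, P *m adj P = 1%:M, A = adj P *m diag_mx s *m P
      & forall k, 0 <= s 0 k].
Proof.
move=> hA; set P := spectralmx A; set s := spectral_diag A.
have adjP : adj P = invmx P by rewrite adjE (invmx_unitary (spectral_unitarymx A)).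
have eA : A = adj P *m diag_mx s *m P.
  by rewrite adjP; apply/orthomx_spectralP/normalmxP; rewrite -adjE psd_adj.
have PV : P *m adj P = 1%:M by rewrite adjP mulmxV // spectral_unit.
exists P, s; split => //; first by rewrite adjP mulVmx // spectral_unit.
move=> k; have := hA (adj P *m delta_mx k 0).
rewrite adjM adjK [in X in X -> _]eA !mulmxA -(mulmxA _ P) PV mulmx1.
by rewrite -(mulmxA _ P) PV mulmx1 -[_ 0 0]/(sesq _ _ _) sesq_delta mxE eqxx.
Qed.

Lemma psd_sqrt d (A : 'M[C]_d) : psd A -> exists D, psd D /\ D *m D = A.
Proof.
move=> /psd_spectral [P [s [_ PV -> hs]]].
exists (adj P *m diag_mx (\row_k sqrtC (s 0 k)) *m P); split.
  by apply/psd_conj/psd_diag => k; rewrite mxE sqrtC_ge0.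
rewrite !mulmxA -(mulmxA _ P) PV mulmx1 -(mulmxA (adj P)) mulmx_diag.
by congr (_ *m diag_mx _ *m _); apply/rowP => k; rewrite !mxE -expr2 sqrtCK.
Qed.

Lemma psd_le_scalar d (A : 'M[C]_d) : psd A ->
  exists2 c : C, 0 <= c & forall c', c <= c' -> loewner A c'%:M.
Proof.
move=> /psd_spectral [P [s [PP PV -> hs]]].
exists (\sum_k s 0 k); first exact: sumr_ge0.
move=> c' hc'; rewrite /loewner.
have -> : c'%:M - adj P *m diag_mx s *m P = adj P *m diag_mx (\row_k (c' - s 0 k)) *m P.
  have -> : (c'%:M : 'M[C]_d) = adj P *m c'%:M *m P.
    by rewrite mul_mx_scalar -scalemxAl PP scalemx1.
  rewrite -mulmxBl -mulmxBr; congr (_ *m _ *m _).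
  by apply/matrixP => i j; rewrite !mxE mulrnBl.
apply/psd_conj/psd_diag => k; rewrite mxE subr_ge0 (le_trans _ hc') //.
by rewrite (bigD1 k) //= lerDl sumr_ge0.
Qed.

End PositiveSemidefinite.

Section KrausSums.
Variable C : numClosedFieldType.
Implicit Types d n m : nat.

Lemma kraus_finType d (T : finType) (F : T -> 'M[C]_d) :
  exists n (K : 'I_n -> 'M[C]_d),
    forall rho, kraus K rho = \sum_t F t *m rho *m adj (F t).
Proof.
exists #|T|, (fun i => F (enum_val i)) => rho.
rewrite /kraus -(big_enum_val (A := T) (fun t => F t *m rho *m adj (F t))).
by apply: eq_bigl => t; rewrite inE.
Qed.

Lemma kraus_add d n m (K : 'I_n -> 'M[C]_d) (K' : 'I_m -> 'M[C]_d) :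
  exists k (G : 'I_k -> 'M[C]_d),
    forall rho, kraus G rho = kraus K rho + kraus K' rho.
Proof.
exists (n + m)%N, (fun i => match split i with inl j => K j | inr j => K' j end) => rho.
rewrite /kraus big_split_ord /=; congr (_ + _); apply: eq_bigr => j _.
  by rewrite (unsplitK (inl _ j)).
by rewrite (unsplitK (inr _ j)).
Qed.

Lemma scale_kraus d n (K : 'I_n -> 'M[C]_d) c rho : 0 <= c ->
  c *: kraus K rho = kraus (fun j => sqrtC c *: K j) rho.
Proof.
move=> c_ge0; rewrite /kraus scaler_sumr; apply: eq_bigr => j _.
rewrite adjZ -!scalemxAl -scalemxAr scalerA geC0_conj ?sqrtC_ge0 //.
by rewrite -expr2 sqrtCK.
Qed.

Lemma mxtrace_kraus d n (K : 'I_n -> 'M[C]_d) rho :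
  \tr (kraus K rho) = \tr ((\sum_j adj (K j) *m K j) *m rho).
Proof.
rewrite /kraus !raddf_sum mulmx_suml raddf_sum /=; apply: eq_bigr => j _.
by rewrite mxtrace_mulC !mulmxA.
Qed.

Lemma mxtrace_mul_delta d (X : 'M[C]_d) i j : \tr (X *m delta_mx j i) = X i j.
Proof.
rewrite -(mul_delta_mx (0 : 'I_1) j i) mulmxA mxtrace_mulC -colE -rowE.
by rewrite trace_mx11 !mxE.
Qed.

Lemma mxtrace_mul_eq1 d (X : 'M[C]_d) :
  (forall rho, \tr (X *m rho) = \tr rho) -> X = 1%:M.
Proof.
move=> hX; apply/matrixP => i j.
by rewrite -mxtrace_mul_delta hX -[delta_mx j i]mul1mx mxtrace_mul_delta.
Qed.

Lemma CPTP_kraus_normalized d k (F : 'I_k -> 'M[C]_d) (D : 'M[C]_d) c : 0 < c ->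
  \sum_j adj (F j) *m F j + adj D *m D = c%:M ->
  CPTP (fun rho => c^-1 *: (kraus F rho + D *m rho *m adj D)).
Proof.
move=> c_gt0 gramF; have kD rho : D *m rho *m adj D = kraus (fun _ : 'I_1 => D) rho.
  by rewrite /kraus big_ord1.
split.
  have [n [G hG]] := kraus_add F (fun _ : 'I_1 => D).
  exists n, (fun j => sqrtC c^-1 *: G j) => rho.
  by rewrite -scale_kraus ?invr_ge0 ?ltW // hG kD.
move=> rho; rewrite linearZ /= kD raddfD /= !mxtrace_kraus -raddfD /= -mulmxDl.
by rewrite big_ord1 gramF mul_scalar_mx linearZ /= mulKf // gt_eqF.
Qed.

End KrausSums.

Section Decomposition.
Variables (C : numClosedFieldType) (d n m : nat).
Variables (Sigma : 'M[C]_d -> 'M[C]_d) (K : 'I_n -> 'M[C]_d) (M : 'I_m -> 'M[C]_d).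
Hypothesis Sigma_TP : trace_preserving Sigma.
Hypothesis Sigma_kraus : forall rho, Sigma rho = kraus K rho - kraus M rho.

Lemma gram_kraus_diff :
  \sum_j adj (K j) *m K j = \sum_j adj (M j) *m M j + 1%:M.
Proof.
apply/eqP; rewrite addrC -subr_eq; apply/eqP/mxtrace_mul_eq1 => rho.
by rewrite mulmxBl linearB /= -!mxtrace_kraus -linearB /= -Sigma_kraus Sigma_TP.
Qed.

Lemma kraus_diff_CPTP_decomposition (q : C) (D : 'M[C]_d) :
  0 < q -> psd D -> D *m D = q%:M - \sum_j adj (M j) *m M j ->
  let Lp rho := (1 + q)^-1 *: (kraus K rho + D *m rho *m adj D) in
  let Lm rho := q^-1 *: (kraus M rho + D *m rho *m adj D) in
  CPTP Lp /\ CPTP Lm /\ forall rho, Sigma rho = (1 + q) *: Lp rho - q *: Lm rho.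
Proof.
move=> q_gt0 psdD DD Lp Lm; rewrite -{1}(psd_adj psdD) in DD.
have q1_gt0 : 0 < 1 + q by rewrite addr_gt0 ?ltr01.
split; [|split].
- apply: CPTP_kraus_normalized => //.
  by rewrite DD gram_kraus_diff addrC addrA subrK raddfD addrC.
- by apply: CPTP_kraus_normalized; rewrite // DD addrC subrK.
- move=> rho; rewrite /Lp /Lm !scalerA !mulfV ?gt_eqF // !scale1r Sigma_kraus.
  by rewrite opprD addrACA subrr addr0.
Qed.

End Decomposition.

Section ChoiExpansion.
Variable C : numClosedFieldType.

Lemma big_pair2 (V : nmodType) (I : finType) (F : (I * I) * (I * I) -> V) :
  \sum_t F t = \sum_i \sum_k \sum_j \sum_l F ((i, k), (j, l)).
Proof.
rewrite pair_bigA /= [RHS](eq_bigr (fun a => \sum_b F (a, b))); last first.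
  by move=> [i k] _; rewrite pair_bigA; apply: eq_bigr => [[j l]].
by rewrite pair_bigA; apply: eq_bigr => [[a b]].
Qed.

Lemma delta_mx_sandwich d (i k l j : 'I_d) (rho : 'M[C]_d) :
  delta_mx i k *m rho *m delta_mx l j = rho k l *: delta_mx i j.
Proof.
rewrite -(mul_delta_mx (0 : 'I_1) i k) -(mul_delta_mx (0 : 'I_1) l j).
rewrite !mulmxA -(mulmxA (delta_mx i 0)) -(mulmxA (delta_mx i 0)).
rewrite -rowE -colE [col _ _]mx11_scalar mul_mx_scalar -scalemxAl.
by rewrite mul_delta_mx !mxE.
Qed.

Variables (d : nat) (S : 'M[C]_d -> 'M[C]_d).
Hypothesis S_linear : is_linear_map S.

Lemma linear_map0 : S 0 = 0.
Proof.
have := S_linear 1 0 0; rewrite !scale1r addr0 => /esym/eqP.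
by rewrite -subr_eq0 addrK => /eqP.
Qed.

Lemma linear_mapD x y : S (x + y) = S x + S y.
Proof. by have := S_linear 1 x y; rewrite !scale1r. Qed.

Lemma linear_mapZ a x : S (a *: x) = a *: S x.
Proof. by rewrite -[a *: x]addr0 (S_linear a x 0) linear_map0 addr0. Qed.

Lemma linear_map_sum (I : finType) (F : I -> 'M[C]_d) :
  S (\sum_i F i) = \sum_i S (F i).
Proof.
by apply: big_morph; [exact: linear_mapD | exact: linear_map0].
Qed.

Definition mx_unit (a : 'I_d * 'I_d) : 'M[C]_d := delta_mx a.1 a.2.

Definition choi (a b : 'I_d * 'I_d) : C := S (delta_mx a.2 b.2) a.1 b.1.

Lemma choi_expansion rho :
  S rho = \sum_t choi t.1 t.2 *: (mx_unit t.1 *m rho *m adj (mx_unit t.2)).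
Proof.
rewrite big_pair2 /choi /mx_unit /=.
under eq_bigr => i _ do under eq_bigr => k _ do under eq_bigr => j _ do
  under eq_bigr => l _ do rewrite adj_delta delta_mx_sandwich scalerA.
have -> : S rho = \sum_k \sum_l rho k l *: S (delta_mx k l).
  rewrite {1}(matrix_sum_delta rho) linear_map_sum; apply: eq_bigr => k _.
  by rewrite linear_map_sum; apply: eq_bigr => l _; rewrite linear_mapZ.
rewrite [RHS]exchange_big; apply: eq_bigr => k _.
under [RHS]eq_bigr => i _ do rewrite exchange_big.
rewrite [RHS]exchange_big; apply: eq_bigr => l _.
rewrite {1}[S _]matrix_sum_delta scaler_sumr; apply: eq_bigr => i _.
by rewrite scaler_sumr; apply: eq_bigr => j _; rewrite scalerA mulrC.
Qed.

Hypothesis S_herm : herm_preserving S.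

Lemma choi_expansion_adj rho :
  S rho = \sum_t (choi t.1 t.2)^* *: (mx_unit t.2 *m rho *m adj (mx_unit t.1)).
Proof.
rewrite -[rho]adjK S_herm choi_expansion adj_sum; apply: eq_bigr => t _.
by rewrite adjZ !adjM adjK mulmxA.
Qed.

End ChoiExpansion.

Arguments mx_unit {C d}.

Section HermPreserving.
Variable C : numClosedFieldType.

Lemma kraus_polarization d (A B rho : 'M[C]_d) w :
  (A + w *: B) *m rho *m adj (A + w *: B) - (A - w *: B) *m rho *m adj (A - w *: B)
  = 2%:R *: (w^* *: (A *m rho *m adj B) + w *: (B *m rho *m adj A)).
Proof.
rewrite !adjD adjN !adjZ !(mulmxDl, mulmxDr, mulNmx, mulmxN) -!(scalemxAl, scalemxAr).
move: (A *m rho *m adj A) (A *m rho *m adj B) (B *m rho *m adj A) (B *m rho *m adj B).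
by move=> X Y Z W; apply/matrixP => i j; rewrite !mxE; ring.
Qed.

Lemma herm_preserving_kraus_diff d (S : 'M[C]_d -> 'M[C]_d) :
  is_linear_map S -> herm_preserving S ->
  exists n m (K : 'I_n -> 'M[C]_d) (M : 'I_m -> 'M[C]_d),
    forall rho, S rho = kraus K rho - kraus M rho.
Proof.
move=> S_linear S_herm.
pose w t := (choi S t.1 t.2)^*.
pose Fp t := mx_unit t.1 + w t *: mx_unit t.2.
pose Fm t := mx_unit t.1 - w t *: mx_unit t.2.
have [n [Kp hKp]] := kraus_finType Fp.
have [m [Km hKm]] := kraus_finType Fm.
pose c : C := (2%:R * 2%:R)^-1.
have c_ge0 : 0 <= c by rewrite invr_ge0 mulr_ge0 ?ler0n.
exists n, m, (fun j => sqrtC c *: Kp j), (fun j => sqrtC c *: Km j) => rho.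
rewrite -!scale_kraus // hKp hKm -scalerBr -sumrB.
under eq_bigr => t _ do rewrite kraus_polarization conjCK.
rewrite -scaler_sumr big_split /= -choi_expansion // -choi_expansion_adj //.
rewrite -mulr2n -scaler_nat !scalerA /c -mulrA mulVf ?scale1r //.
by rewrite mulf_neq0 ?pnatr_eq0.
Qed.

End HermPreserving.

Local Open Scope complex_scope.

Theorem mainTheorem1 (R : realType) (d : nat)
    (Sigma : 'M[R[i]]_d -> 'M[R[i]]_d) :
  (0 < d)%N ->
  is_linear_map Sigma -> trace_preserving Sigma -> herm_preserving Sigma ->
  (* Sigma = (1+p) Lambda_+ - p Lambda_- with CPTP Lambda_+-, p > 0 *)
  (exists p : R, 0 < p /\
     exists Lp Lm : 'M[R[i]]_d -> 'M[R[i]]_d,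
       CPTP Lp /\ CPTP Lm /\
       forall rho, Sigma rho = (1 + p)%:C *: Lp rho - p%:C *: Lm rho)
  /\
  (* Sigma is a difference of two Kraus sums *)
  (exists (n m : nat) (K : 'I_n -> 'M[R[i]]_d) (M : 'I_m -> 'M[R[i]]_d),
     forall rho, Sigma rho = kraus K rho - kraus M rho)
  /\
  (* explicit construction for any such families and any admissible p *)
  (forall (n m : nat) (K : 'I_n -> 'M[R[i]]_d) (M : 'I_m -> 'M[R[i]]_d),
     (forall rho, Sigma rho = kraus K rho - kraus M rho) ->
     forall p : R, 0 < p ->
     loewner (\sum_(j < m) adj (M j) *m M j) (p%:C)%:M ->
     (* the PSD square root D of p I - sum_j M_j^dagger M_j exists ... *)
     (exists D : 'M[R[i]]_d, psd D /\
        D *m D = (p%:C)%:M - \sum_(j < m) adj (M j) *m M j)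
     /\
     (* ... and, D being that square root, the maps below are CPTP and decompose Sigma *)
     (forall D : 'M[R[i]]_d, psd D ->
        D *m D = (p%:C)%:M - \sum_(j < m) adj (M j) *m M j ->
        let Lp := fun rho => ((1 + p)%:C)^-1 *: (kraus K rho + D *m rho *m adj D) in
        let Lm := fun rho => (p%:C)^-1 *: (kraus M rho + D *m rho *m adj D) in
        CPTP Lp /\ CPTP Lm /\
        forall rho, Sigma rho = (1 + p)%:C *: Lp rho - p%:C *: Lm rho)).
Proof.
move=> _ Sigma_linear Sigma_TP Sigma_herm.
have [n [m [K [M Sigma_kraus]]]] := herm_preserving_kraus_diff Sigma_linear Sigma_herm.
split; last split.
- have [c c_ge0 c_bound] := psd_le_scalar (psd_gram M).
  move: c_ge0; rewrite lecE /= => /andP [/eqP Im_c Re_c_ge0].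
  pose p := complex.Re c + 1.
  have p_gt0 : 0 < p by rewrite ltr_wpDl.
  have c_le_p : c <= p%:C by rewrite lecE /= Im_c eqxx lerDl ler01.
  have pC_gt0 : 0 < p%:C by rewrite ltcE /= eqxx.
  have [D [psdD DD]] := psd_sqrt (c_bound _ c_le_p).
  have [CPp [CPm Sigma_eq]] :=
    kraus_diff_CPTP_decomposition Sigma_TP Sigma_kraus pC_gt0 psdD DD.
  exists p; split => //; do 2 eexists; rewrite rmorphD rmorph1.
  by split; [exact: CPp | split; [exact: CPm | exact: Sigma_eq]].
- by exists n, m, K, M.
- move=> {}n {}m {}K {}M {}Sigma_kraus p p_gt0 M_bound.
  split=> [|D psdD DD]; first exact: psd_sqrt.
  rewrite rmorphD rmorph1.
  by apply: kraus_diff_CPTP_decomposition; rewrite // ltcE /= eqxx.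
Qed.
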